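(* Let $\Sigma$ be a signature, let $\mathscr F_\Sigma:\mathbf{Fuz}_H\to\mathbf{Alg}(\Sigma)$ be a left adjoint to the forgetful functor $\mathscr U_\Sigma:\mathbf{Alg}(\Sigma)\to\mathbf{Fuz}_H$, and let $\mathscr X_0=\{\mathscr F_\Sigma(X,c_\bot)\mid X\text{ a set}\}$ (where $c_\bot$ is constantly $\bot$) and $\mathscr X_{\mathsf E}=\{\mathscr F_\Sigma(X,\mu_X)\mid(X,\mu_X)\in\mathbf{Fuz}_H\}$. For a class $\mathscr X$ of $\Sigma$-algebras let $\mathscr E_{\Sigma,\mathscr X}$ be the class of $e\in\mathscr E_\Sigma$ such that every $P\in\mathscr X$ is projective with respect to $e$. Then: (1) $\mathscr E_{\Sigma,\mathscr X_0}=\mathscr E_\Sigma$; (2) $\mathscr E_{\Sigma,\mathscr X_{\mathsf E}}=\{e\in\mathscr E_\Sigma\mid\mathscr U_\Sigma(e)\text{ is a split epimorphism in }\mathbf{Fuz}_H\}$.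
   Context: $H$ is a frame with bottom $\bot$. An $H$-fuzzy set is a pair $(A,\mu_A)$ of a set $A$ and a function $\mu_A:A\to H$; an arrow $f:(A,\mu_A)\to(B,\mu_B)$ is a function with $\mu_A(x)\le\mu_B(f(x))$; they form $\mathbf{Fuz}_H$. For $n\ge1$, $(A,\mu_A)^n=(A^n,\mu)$ with $\mu(a_1,\dots,a_n)=\bigwedge_i\mu_A(a_i)$. A signature $\Sigma=(O,\mathrm{ar},C)$ consists of a set $O$ of operation symbols with arity $\mathrm{ar}:O\to\{1,2,\dots\}$ and a set $C$ of constant symbols. A $\Sigma$-algebra $\mathcal A=((A,\mu_A),\Sigma^{\mathcal A})$ is an $H$-fuzzy set $(A,\mu_A)$ together with, for each $f\in O$, an arrow $f^{\mathcal A}:(A,\mu_A)^{\mathrm{ar}(f)}\to(A,\mu_A)$ of $\mathbf{Fuz}_H$ and, for each $c\in C$, an element $c^{\mathcal A}\in A$. A morphism of $\Sigma$-algebras is an arrow of $\mathbf{Fuz}_H$ between carriers preserving constants and commuting with operations; this gives the category $\mathbf{Alg}(\Sigma)$, with forgetful functor $\mathscr U_\Sigma$ to $\mathbf{Fuz}_H$ (which has a left adjoint). $\mathscr E_\Sigma$ is the class of morphisms of $\Sigma$-algebras whose underlying function is surjective. An object $P$ is projective with respect to an arrow $e:A\to B$ if for every $h:P\to B$ there is $k:P\to A$ with $e\circ k=h$. *)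

From mathcomp Require Import all_boot all_order.
Set Implicit Arguments. Unset Strict Implicit. Unset Printing Implicit Defensive.
Import Order.TTheory.
Local Open Scope order_scope.

Section Fuzzy.
Variables (d : Order.disp_t) (H : tbLatticeType d).

Definition is_lub (S : H -> Prop) (j : H) :=
  (forall x, S x -> x <= j) /\ (forall u, (forall x, S x -> x <= u) -> j <= u).

Definition is_frame :=
  (forall S : H -> Prop, exists j, is_lub S j) /\
  (forall (a : H) (S : H -> Prop) (j : H), is_lub S j ->
     is_lub (fun y => exists2 x, S x & y = a `&` x) (a `&` j)).

Record fuzzy := Fuzzy { fcar : Type; fmu : fcar -> H }.

Definition fuz_arrow (A B : fuzzy) (f : fcar A -> fcar B) :=
  forall x : fcar A, @fmu A x <= @fmu B (f x).
Arguments fuz_arrow : clear implicits.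

Record signature := Signature {
  op : Type; ar : op -> nat; ar_pos : forall o, 0 < ar o; cst : Type }.

(* Sigma-algebras in Fuz_H.  (A,mu)^n has membership the meet of the
   memberships of the components; an operation is an arrow (A,mu)^n -> (A,mu). *)
Record algebra (S : signature) := Algebra {
  acar : Type;
  amu : acar -> H;
  aop : forall o : op S, ('I_(ar o) -> acar) -> acar;
  aop_fuz : forall (o : op S) (a : 'I_(ar o) -> acar),
      \meet_(i < ar o) amu (a i) <= amu (aop a);
  acst : cst S -> acar }.

Definition ufuzzy S (A : algebra S) : fuzzy := @Fuzzy (acar A) (@amu S A).

Record morph S (A B : algebra S) := Morph {
  mfun : acar A -> acar B;
  mfun_fuz : fuz_arrow (ufuzzy A) (ufuzzy B) mfun;
  mfun_cst : forall c, mfun (acst A c) = acst B c;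
  mfun_op : forall (o : op S) (a : 'I_(ar o) -> acar A),
      mfun (aop a) = aop (fun i => mfun (a i)) }.

Definition in_E S (A B : algebra S) (e : morph A B) :=
  forall y, exists x, mfun e x = y.

Definition projective S (P A B : algebra S) (e : morph A B) :=
  forall h : morph P B, exists k : morph P A,
    forall x, mfun e (mfun k x) = mfun h x.

Definition split_epi_fuz (A B : fuzzy) (e : fcar A -> fcar B) :=
  exists s : fcar B -> fcar A, fuz_arrow B A s /\ forall y, e (s y) = y.

(* (F, eta) is a left adjoint of U_Sigma, given by its universal arrows:
   eta_(X,mu) : (X,mu) -> U(F(X,mu)) is an arrow of Fuz_H and for every
   algebra A and arrow f : (X,mu) -> U(A) there is a unique morphism
   g : F(X,mu) -> A with U(g) o eta = f. *)
Definition left_adjoint S (F : forall X : Type, (X -> H) -> algebra S)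
  (eta : forall (X : Type) (mu : X -> H), X -> acar (F X mu)) :=
  forall (X : Type) (mu : X -> H),
    fuz_arrow (@Fuzzy X mu) (ufuzzy (F X mu)) (eta X mu) /\
    forall (A : algebra S) (f : X -> acar A),
      fuz_arrow (@Fuzzy X mu) (ufuzzy A) f ->
      exists g : morph (F X mu) A,
        (forall x, mfun g (eta X mu x) = f x) /\
        (forall g' : morph (F X mu) A,
            (forall x, mfun g' (eta X mu x) = f x) -> forall y, mfun g' y = mfun g y).

End Fuzzy.

(* Maps out of a free algebra F(X, mu) are determined by their restriction
   along eta, and every arrow (X, mu) -> U(A) of Fuz_H extends to one.  So a
   free algebra is projective with respect to e as soon as each composite
   h o eta lifts through e by an arrow of Fuz_H.  With the constant membership
   \bot any set-theoretic lift will do, and surjectivity provides one.  For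
   arbitrary memberships a section of U(e) in Fuz_H gives the lift; conversely,
   projectivity of F(U(B)) lifts the counit F(U(B)) -> B, and precomposing the
   lift with eta yields such a section. *)

From mathcomp Require Import all_boot all_order.
From Stdlib Require Import ClassicalEpsilon.
Import Order.TTheory.
Local Open Scope order_scope.

Section Morphisms.
Context {d : Order.disp_t} {H : tbLatticeType d} {S : signature}.

Lemma fuz_arrow_comp {A B C : fuzzy H} {g : fcar B -> fcar C} {f : fcar A -> fcar B} :
  @fuz_arrow _ _ A B f -> @fuz_arrow _ _ B C g -> @fuz_arrow _ _ A C (fun x => g (f x)).
Proof. by move=> ff fg x; exact: le_trans (ff x) (fg (f x)). Qed.

Definition morph_comp {A B C : algebra H S} (g : morph B C) (f : morph A B) :
  morph A C.
Proof.
refine (@Morph _ _ S A C (fun x => mfun g (mfun f x)) _ _ _).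
- exact: fuz_arrow_comp (mfun_fuz f) (mfun_fuz g).
- by move=> c; rewrite !mfun_cst.
- by move=> o a; rewrite !mfun_op.
Defined.

Lemma in_E_section {A B : algebra H S} {e : morph A B} :
  in_E e -> exists s : acar B -> acar A, forall y, mfun e (s y) = y.
Proof.
move=> surj.
exists (fun y => proj1_sig (constructive_indefinite_description _ (surj y))).
by move=> y; case: constructive_indefinite_description.
Qed.

End Morphisms.

Section FreeAlgebras.
Variables (d : Order.disp_t) (H : tbLatticeType d) (S : signature).
Variable F : forall X : Type, (X -> H) -> algebra H S.
Variable eta : forall (X : Type) (mu : X -> H), X -> acar (F X mu).
Hypothesis Hadj : @left_adjoint d H S F eta.

Lemma eta_fuz {X : Type} (mu : X -> H) :
  @fuz_arrow _ _ (Fuzzy mu) (ufuzzy (F X mu)) (eta X mu).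
Proof. exact: (Hadj X mu).1. Qed.

Lemma free_morph_eq {X : Type} {mu : X -> H} {A : algebra H S}
    (g1 g2 : morph (F X mu) A) :
  (forall x, mfun g1 (eta X mu x) = mfun g2 (eta X mu x)) ->
  forall y, mfun g1 y = mfun g2 y.
Proof.
move=> g12 y.
have g2eta_fuz := fuz_arrow_comp (eta_fuz mu) (mfun_fuz g2).
have [g [_ g_uniq]] := (Hadj X mu).2 A _ g2eta_fuz.
by rewrite (g_uniq g1 g12) (g_uniq g2).
Qed.

Lemma free_projective_of_lift {X : Type} {mu : X -> H} {A B : algebra H S}
    {e : morph A B} {h : morph (F X mu) B} (f : X -> acar A) :
  @fuz_arrow _ _ (Fuzzy mu) (ufuzzy A) f ->
  (forall x, mfun e (f x) = mfun h (eta X mu x)) ->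
  exists k : morph (F X mu) A, forall y, mfun e (mfun k y) = mfun h y.
Proof.
move=> f_fuz ef.
have [k [kE _]] := (Hadj X mu).2 A f f_fuz.
exists k; apply: (free_morph_eq (morph_comp e k)) => x.
by rewrite /= kE ef.
Qed.

Lemma free_bot_projective (X : Type) (A B : algebra H S) (e : morph A B) :
  in_E e -> projective (F X (fun _ => \bot)) e.
Proof.
move=> /in_E_section [s sE] h.
apply: (free_projective_of_lift (fun x => s (mfun h (eta _ _ x)))) => x.
  exact: le0x.
exact: sE.
Qed.

Lemma free_projective_of_split (X : Type) (mu : X -> H) (A B : algebra H S)
    (e : morph A B) :
  @split_epi_fuz _ _ (ufuzzy A) (ufuzzy B) (mfun e) -> projective (F X mu) e.
Proof.
move=> [s [s_fuz sE]] h.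
apply: (free_projective_of_lift (fun x => s (mfun h (eta X mu x)))) => x.
  exact: fuz_arrow_comp (fuz_arrow_comp (eta_fuz mu) (mfun_fuz h)) s_fuz x.
exact: sE.
Qed.

Lemma split_of_free_projective (A B : algebra H S) (e : morph A B) :
  projective (F (acar B) (@amu _ _ _ B)) e ->
  @split_epi_fuz _ _ (ufuzzy A) (ufuzzy B) (mfun e).
Proof.
move=> proj.
have id_fuz : @fuz_arrow _ _ (ufuzzy B) (ufuzzy B) id by [].
have [counit [counitE _]] := (Hadj _ (@amu _ _ _ B)).2 B id id_fuz.
have [k kE] := proj counit.
exists (fun y => mfun k (eta _ _ y)); split.
  exact: fuz_arrow_comp (eta_fuz (@amu _ _ _ B)) (mfun_fuz k).
by move=> y; rewrite kE counitE.
Qed.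

End FreeAlgebras.

Theorem lemma51 (d : Order.disp_t) (H : tbLatticeType d) (Hframe : is_frame H)
  (S : signature)
  (F : forall X : Type, (X -> H) -> algebra H S)
  (eta : forall (X : Type) (mu : X -> H), X -> acar (F X mu))
  (Hadj : @left_adjoint d H S F eta) :
  (* (1)  E_{Sigma, X_0} = E_Sigma *)
  (forall (A B : algebra H S) (e : morph A B),
     (in_E e /\ forall X : Type, projective (F X (fun _ => \bot)) e) <-> in_E e) /\
  (* (2)  E_{Sigma, X_E} = { e in E_Sigma | U(e) split epi in Fuz_H } *)
  (forall (A B : algebra H S) (e : morph A B),
     (in_E e /\ forall (X : Type) (mu : X -> H), projective (F X mu) e) <->
     (in_E e /\ @split_epi_fuz d H (ufuzzy A) (ufuzzy B) (mfun e))).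
Proof.
split=> A B e.
- split=> [[surj _] // | surj]; split=> // X.
  exact: free_bot_projective.
- split=> -[surj proj]; split=> //.
  + exact: split_of_free_projective (proj _ _).
  + by move=> X mu; exact: free_projective_of_split.
Qed.
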